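(* Let $T$ satisfy Condition 1 and let $U$ be a quantization of $T$ with respect to the partition $\mathcal M_\Bbbk$ of $[0,1]$ into $N_\Bbbk$ equal intervals. Let $X\subset[0,1]$ be an interval (or a finite union of intervals) such that all endpoints of $X$ and all endpoints of $T^{-1}X$ belong to the set of endpoints of the intervals of $\mathcal M_\Bbbk$. Then $$U^{-1}P_XU=P_{T^{-1}X},$$ where for a set $Y$ of this kind $P_Y=\mathrm{Op}_\Bbbk(\chi_Y)$ with $\chi_Y$ the characteristic function of $Y$.
   Context: Condition 1: $T:[0,1]\to[0,1]$, integers $\Lambda_1,\dots,\Lambda_l\geq2$ with $\sum\Lambda_j^{-1}=1$, consecutive intervals $I_1,\dots,I_l$ with $|I_j|=\Lambda_j^{-1}$, $T$ affine with slope $\Lambda_j$ on $I_j$ mapping $I_j$ onto $[0,1]$. $\mathcal M_\Bbbk$ consists of $E_i=[(i-1)/N_\Bbbk,i/N_\Bbbk]$, $i=1,\dots,N_\Bbbk$, where all endpoints of the $I_j$ are endpoints of intervals of $\mathcal M_\Bbbk$. With $B_\Bbbk(i,j)=|E_i\cap T^{-1}E_j|/|E_i|$, a quantization is a unitary $N_\Bbbk\times N_\Bbbk$ matrix $U$ with $B_\Bbbk(j,i)=|U(i,j)|^2$ for all $i,j$. $\mathrm{Op}_\Bbbk(f)$ is the diagonal matrix with $(i,i)$ entry equal to the average $N_\Bbbk\int_{E_i}f\,dx$ (so $P_Y$ is the orthogonal projection onto the coordinates $i$ with $E_i\subseteq Y$). *)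

From HB Require Import structures.
From mathcomp Require Import all_boot all_order all_algebra.
From mathcomp Require Import all_classical all_reals all_analysis.
From mathcomp Require Import complex.
Set Implicit Arguments. Unset Strict Implicit. Unset Printing Implicit Defensive.
Import Order.TTheory GRing.Theory Num.Theory.
Import numFieldNormedType.Exports.
Local Open Scope classical_set_scope.
Local Open Scope ring_scope.
Local Open Scope complex_scope.

Section Defs.
Variable R : realType.

(* left endpoint of I_j (0-based): a_j = sum_{k<j} 1/Lambda_k; a_0 = 0, a_l = 1 *)
Definition brk (l : nat) (Lam : 'I_l -> nat) (j : nat) : R :=
  \sum_(k < l | (k < j)%N) ((Lam k)%:R)^-1.

Definition grid_pt (N : nat) (x : R) : Prop :=
  exists i : nat, (i <= N)%N /\ x = i%:R / N%:R.

(* Condition 1, together with the compatibility of the partition M_k *)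
Definition condition1 (l : nat) (Lam : 'I_l -> nat) (T : R -> R) (N : nat) : Prop :=
  [/\ (forall j, 2 <= Lam j)%N,
      \sum_(j < l) ((Lam j)%:R)^-1 = (1 : R),
      (forall x, 0 <= x <= 1 -> 0 <= T x <= 1),
      (forall (j : 'I_l) x, brk Lam j < x < brk Lam j.+1 ->
           T x = (Lam j)%:R * (x - brk Lam j)) &
      (0 < N)%N /\ (forall j, (j <= l)%N -> grid_pt N (brk Lam j))].

Definition cell (N : nat) (i : 'I_N) : set R :=
  `[(i%:R / N%:R), (i.+1%:R / N%:R)].

Definition leb := (@lebesgue_measure R).

Definition len (A : set R) : R := fine (leb A).

Definition Bmat (T : R -> R) (N : nat) (i j : 'I_N) : R :=
  len (cell i `&` (T @^-1` cell j)) / len (cell i).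

Definition adjoint (N : nat) (U : 'M[R[i]]_N) : 'M[R[i]]_N :=
  (map_mx Num.conj U)^T.

Definition unitary (N : nat) (U : 'M[R[i]]_N) : Prop :=
  adjoint U *m U = 1%:M.

Definition quantization (T : R -> R) (N : nat) (U : 'M[R[i]]_N) : Prop :=
  unitary U /\ forall i j : 'I_N, `|U i j| ^+ 2 = (Bmat T j i)%:C.

(* Op_k(f) for f = chi_Y: diagonal with (i,i) entry N * int_{E_i} chi_Y = N |E_i /\ Y| *)
Definition Pproj (N : nat) (Y : set R) : 'M[R[i]]_N :=
  diag_mx (\row_i ((N%:R * len (cell i `&` Y))%:C)).

Definition grid_union (N : nat) (Y : set R) : Prop :=
  exists (m : nat) (lo hi : 'I_m -> R) (bl br : 'I_m -> bool),
    (forall k, grid_pt N (lo k) /\ grid_pt N (hi k)) /\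
    Y = \bigcup_(k in [set: 'I_m])
          [set x | x \in Interval (BSide (bl k) (lo k)) (BSide (br k) (hi k))].

(* T^{-1} Y, T viewed as a map [0,1] -> [0,1] *)
Definition preimT (T : R -> R) (Y : set R) : set R := `[0, 1] `&` (T @^-1` Y).

End Defs.

(* Since U is invertible it suffices to show P_X U = U P_{T^-1 X}, i.e. that
   the diagonal entry of P_X at a equals that of P_{T^-1 X} at b whenever
   U(a,b) <> 0.  For a finite union Y of grid intervals, the entry of P_Y at k
   is 1 or 0 according as the open cell E_k° lies in Y or misses it.  If
   U(a,b) <> 0 then |E_b ∩ T^-1 E_a| > 0; as E_b lies inside one branch, where
   T is affine and injective, this forces some x in E_b° with T x in E_a°, and
   then E_a° ⊆ X iff E_b° ⊆ T^-1 X. *)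

From HB Require Import structures.
From mathcomp Require Import all_boot all_order all_algebra.
From mathcomp Require Import all_classical all_reals all_analysis.
From mathcomp Require Import complex.
Import Order.TTheory GRing.Theory Num.Theory.
Local Open Scope classical_set_scope.
Local Open Scope ring_scope.

Lemma lebesgue_measure_sub_seq (R : realType) (s : seq R) (S : set R) :
  S `<=` [set` s] -> measurable S /\ lebesgue_measure S = 0%E.
Proof.
move=> Ss; have cS : countable S.
  exact/finite_set_countable/(sub_finite_set Ss)/finite_seq.
split; first by apply: countable_measurable cS => t; exact: measurable_set1.
exact: countable_lebesgue_measure0.
Qed.

Section Grid.
Variables (R : realType) (N : nat).
Hypothesis N_gt0 : (0 < N)%N.

Definition open_cell (k : nat) : set R := `](k%:R / N%:R), (k.+1%:R / N%:R)[.

Lemma ltr_grid (a b : nat) : (a%:R / N%:R < b%:R / N%:R :> R) = (a < b)%N.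
Proof. by rewrite ltr_pM2r ?ltr_nat // invr_gt0 ltr0n. Qed.

Lemma ler_grid (a b : nat) : (a%:R / N%:R <= b%:R / N%:R :> R) = (a <= b)%N.
Proof. by rewrite ler_pM2r ?ler_nat // invr_gt0 ltr0n. Qed.

Lemma open_cell_sub_itv (k : nat) (b b' : bool) (lo hi y : R) :
  grid_pt N lo -> grid_pt N hi ->
  open_cell k y -> y \in Interval (BSide b lo) (BSide b' hi) ->
  open_cell k `<=` [set x | x \in Interval (BSide b lo) (BSide b' hi)].
Proof.
move=> [p [_ ->]] [q [_ ->]].
rewrite /open_cell /= in_itv /= => /andP[ky yk] Iy.
have : y \in `[p%:R / N%:R, q%:R / N%:R].
  by apply: subitvP Iy; rewrite subitvE !bnd_simp; case: (b); case: (b').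
rewrite in_itv /= => /andP[py yq].
have pk : p%:R / N%:R <= k%:R / N%:R :> R.
  by rewrite ler_grid -ltnS -(ltr_grid p); apply: le_lt_trans yk.
have kq : k.+1%:R / N%:R <= q%:R / N%:R :> R.
  by rewrite ler_grid -(ltr_grid k); apply: lt_le_trans yq.
move=> z; rewrite /= in_itv /= => /andP[kz zk].
apply: subitvP (_ : z \in `]p%:R / N%:R, q%:R / N%:R[).
  by rewrite subitvE !bnd_simp; case: (b); case: (b').
by rewrite in_itv /= (le_lt_trans pk kz) (lt_le_trans zk kq).
Qed.

Lemma open_cell_sub_grid_union (Y : set R) (k : nat) :
  grid_union N Y -> open_cell k `&` Y !=set0 -> open_cell k `<=` Y.
Proof.
move=> [m [lo [hi [bl [br [grid ->]]]]]] [y [ky [n _ Iy]]] z kz.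
have [glo ghi] := grid n.
by exists n => //; exact: open_cell_sub_itv glo ghi ky Iy z kz.
Qed.

Lemma grid_union_measurable (Y : set R) : grid_union N Y -> measurable Y.
Proof.
move=> [m [lo [hi [bl [br [_ ->]]]]]].
apply: fin_bigcup_measurable; first exact: finite_finset.
by move=> k _; exact: measurable_itv.
Qed.

Lemma open_cell_sub01 (k : 'I_N) : open_cell k `<=` `[0, 1].
Proof.
move=> x; rewrite /open_cell /= !in_itv /= => /andP[kx xk].
rewrite (le_trans _ (ltW kx)) ?divr_ge0 //= (le_trans (ltW xk)) //.
by rewrite ler_pdivrMr ?ltr0n // mul1r ler_nat.
Qed.

Lemma lebesgue_measure_open_cell (k : nat) :
  lebesgue_measure (open_cell k) = (N%:R^-1)%:E.
Proof.
rewrite lebesgue_measure_itv /= lte_fin ltr_grid // ltnSn.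
by rewrite -EFinD -mulrBl -natrB // subSnn mul1r.
Qed.

Lemma lebesgue_measure_cellI (k : 'I_N) (Y : set R) : measurable Y ->
  lebesgue_measure (cell k `&` Y) = lebesgue_measure (open_cell k `&` Y).
Proof.
move=> mY.
have kY_sub : open_cell k `&` Y `<=` cell k `&` Y.
  apply: setSI => x; rewrite /open_cell /cell /= !in_itv /= => /andP[kx xk].
  by rewrite (ltW kx) (ltW xk).
have [mD D0] : measurable (cell k `&` Y `\` (open_cell k `&` Y)) /\
    lebesgue_measure (cell k `&` Y `\` (open_cell k `&` Y)) = 0%E.
  apply: (@lebesgue_measure_sub_seq _ [:: k%:R / N%:R; k.+1%:R / N%:R]).
  move=> x [[cx Yx] kYx]; move: cx; rewrite /cell /= in_itv /= !inE.
  move=> /andP[kx xk]; apply/negPn/negP; rewrite negb_or => /andP[nk nk1].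
  by apply: kYx; split => //; rewrite /open_cell /= in_itv /= !lt_neqAle kx xk
    eq_sym nk nk1.
rewrite -[in LHS](setDUK kY_sub) measureU0 //.
by apply: measurableI => //; exact: measurable_itv.
Qed.

Lemma len_cellI_grid_union (k : 'I_N) (Y : set R) : grid_union N Y ->
  len (cell k `&` Y) = if `[< open_cell k `<=` Y >] then N%:R^-1 else 0.
Proof.
move=> gY; have mY := grid_union_measurable _ gY.
rewrite /len /leb (lebesgue_measure_cellI _ _ mY).
case: asboolP => [kY|kY].
  by rewrite setIidl // lebesgue_measure_open_cell.
suff -> : open_cell k `&` Y = set0 by rewrite measure0.
apply/seteqP; split => // x kYx.
by apply: kY; apply: open_cell_sub_grid_union gY _; exists x.
Qed.

Lemma open_cell_sub_preimT (T : R -> R) (X : set R) (a b : 'I_N) (x : R) :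
  grid_union N X -> grid_union N (preimT T X) ->
  open_cell b x -> open_cell a (T x) ->
  open_cell a `<=` X <-> open_cell b `<=` preimT T X.
Proof.
move=> gX gTX bx aTx; split => [aX|bTX].
  apply: open_cell_sub_grid_union gTX _.
  exists x; split => //; split; [exact: (@open_cell_sub01 b x bx) | exact: aX].
apply: open_cell_sub_grid_union gX _.
by exists (T x); split => //; have [] := bTX x bx.
Qed.

End Grid.
Arguments open_cell {R}.
Arguments len_cellI_grid_union {R N} N_gt0 {k Y}.
Arguments open_cell_sub_preimT {R N} N_gt0 {T X a b x}.

Lemma ex_crossing (P : pred nat) (n : nat) :
  P 0%N -> ~~ P n -> exists2 k, (k < n)%N & P k && ~~ P k.+1.
Proof.
elim: n => [-> //|n IH] P0 Pn.
case Pn' : (P n); first by exists n; rewrite // Pn' Pn.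
by have [k kn Pk] := IH P0 (negbT Pn'); exists k => //; exact: ltnW.
Qed.
Arguments ex_crossing {P n}.

Section Branches.
Variables (R : realType) (l : nat) (Lam : 'I_l -> nat) (T : R -> R) (N : nat).
Hypothesis C1 : condition1 Lam T N.

Lemma brk0 : brk R Lam 0 = 0.
Proof. by rewrite /brk big1 // => k; rewrite ltn0. Qed.

Lemma brk_last : brk R Lam l = 1.
Proof.
have [_ sum1 _ _ _] := C1.
by rewrite /brk -[RHS]sum1; apply: eq_bigl => k; rewrite ltn_ord.
Qed.

Lemma cell_sub_branch (j : 'I_N) : exists k : 'I_l,
  brk R Lam k <= j%:R / N%:R /\ j.+1%:R / N%:R <= brk R Lam k.+1.
Proof.
have [_ _ _ _ [N_gt0 grid_brk]] := C1.
pose P m := brk R Lam m <= j%:R / N%:R.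
have P0 : P 0%N by rewrite /P brk0 divr_ge0.
have Pl : ~~ P l.
  by rewrite /P brk_last -ltNge ltr_pdivrMr ?ltr0n // mul1r ltr_nat.
have [k kl /andP[Pk Pk1]] := ex_crossing P0 Pl.
exists (Ordinal kl); split => //.
have [q [_ brkE]] := grid_brk k.+1 kl.
by move: Pk1; rewrite /P -ltNge brkE ltr_grid // ler_grid.
Qed.

Lemma Bmat_neq0_open_cell (i j : 'I_N) :
  Bmat T j i != 0 -> exists x, open_cell N j x /\ open_cell N i (T x).
Proof.
have [Lam_ge2 _ _ T_affine [N_gt0 _]] := C1.
have [k [k_j j_k]] := cell_sub_branch j.
pose L : R := (Lam k)%:R.
have L_neq0 : L != 0 by rewrite pnatr_eq0 -lt0n; apply: leq_trans (Lam_ge2 k).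
have T_jE x : open_cell N j x -> T x = L * (x - brk R Lam k).
  rewrite /open_cell /= in_itv /= => /andP[jx xj]; apply: T_affine.
  by rewrite (le_lt_trans k_j jx) (lt_le_trans xj j_k).
pose p c : R := brk R Lam k + c%:R / N%:R / L.
have T_jK x c : open_cell N j x -> T x = c%:R / N%:R -> x = p c.
  move=> jx; rewrite T_jE // /p => e.
  by rewrite -e mulrAC divff // mul1r addrC subrK.
(* Off the open cells, E_j ∩ T^-1 E_i only contains the endpoints of E_j and
   the preimages of the endpoints of E_i under the injective branch. *)
apply: contra_neqP => no_x.
have [_ null] : measurable (cell j `&` (T @^-1` cell i)) /\
    lebesgue_measure (cell j `&` (T @^-1` cell i)) = 0%E.
  apply: (@lebesgue_measure_sub_seq _
    [:: j%:R / N%:R; j.+1%:R / N%:R; p i; p i.+1]).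
  move=> x [jx iTx]; rewrite /= !inE.
  have [->|x_j] := eqVneq x (j%:R / N%:R); first by [].
  have [->|x_j1] := eqVneq x (j.+1%:R / N%:R); first by rewrite orbT.
  have jx' : open_cell N j x.
    move: jx; rewrite /cell /open_cell /= !in_itv /= => /andP[jx xj].
    by rewrite !lt_neqAle jx xj eq_sym x_j x_j1.
  have [/(T_jK _ _ jx') ->|Tx_i] := eqVneq (T x) (i%:R / N%:R).
    by rewrite eqxx !orbT.
  have [/(T_jK _ _ jx') ->|Tx_i1] := eqVneq (T x) (i.+1%:R / N%:R).
    by rewrite eqxx !orbT.
  exfalso; apply: no_x; exists x; split => //.
  move: iTx; rewrite /cell /open_cell /= !in_itv /= => /andP[iTx Txi].
  by rewrite !lt_neqAle iTx Txi eq_sym Tx_i Tx_i1.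
by rewrite /Bmat /len /leb null mul0r.
Qed.

End Branches.
Arguments Bmat_neq0_open_cell {R l Lam T N} C1 {i j}.

Lemma diag_mx_mulmx_comm (K : comPzRingType) (n : nat) (d e : 'rV[K]_n)
    (A : 'M[K]_n) :
  (forall i j, A i j != 0 -> d 0 i = e 0 j) -> diag_mx d *m A = A *m diag_mx e.
Proof.
move=> de; apply/matrixP => i j; rewrite mul_diag_mx mul_mx_diag !mxE.
by have [->|/de ->] := eqVneq (A i j) 0; rewrite ?mulr0 ?mul0r // mulrC.
Qed.

Local Open Scope complex_scope.

Lemma quantization_Bmat_neq0 (R : realType) (T : R -> R) (N : nat)
    (U : 'M[R[i]]_N) (a b : 'I_N) :
  quantization T U -> U a b != 0 -> Bmat T b a != 0.
Proof.
move=> [_ UB]; apply: contra_neq => B0.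
by apply/eqP; rewrite -normr_eq0 -sqrf_eq0 UB B0.
Qed.

Arguments quantization_Bmat_neq0 {R T N U a b}.

Theorem proposition2 (R : realType) (l : nat) (Lam : 'I_l -> nat) (T : R -> R)
  (N : nat) (U : 'M[R[i]]_N) (X : set R) :
  condition1 Lam T N ->
  quantization T U ->
  X `<=` `[0, 1] ->
  grid_union N X ->
  grid_union N (preimT T X) ->
  invmx U *m Pproj N X *m U = Pproj N (preimT T X).
Proof.
move=> C1 qU _ gX gTX.
have N_gt0 : (0 < N)%N by case: C1 => _ _ _ _ [].
suff PU : Pproj N X *m U = U *m Pproj N (preimT T X).
  have [_ U_unit] := mulmx1_unit qU.1.
  by rewrite -mulmxA PU mulmxA mulVmx // mul1mx.
apply: diag_mx_mulmx_comm => a b Uab; rewrite !mxE.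
have [x [bx aTx]] := Bmat_neq0_open_cell C1 (quantization_Bmat_neq0 qU Uab).
rewrite !len_cellI_grid_union //.
by rewrite (asbool_equiv_eq (open_cell_sub_preimT N_gt0 gX gTX bx aTx)).
Qed.
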